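(* Let $V$ be a commutative valuation domain with quotient field $F$, $K/F$ a finite Galois extension with group $G$, $S$ the integral closure of $V$ in $K$, and $f:G\times G\to S\setminus\{0\}$ a normalized $2$-cocycle. For $\sigma\in G$ let $I_\sigma=\bigcap M$, the intersection over those maximal ideals $M$ of $S$ with $f(\sigma,\sigma^{-1})\notin M$. Then $J_G(A_f)=\sum_{\sigma\in G}I_\sigma x_\sigma$.
   Context: $V$ has arbitrary Krull dimension. A normalized 2-cocycle satisfies $\sigma(f(\tau,\gamma))f(\sigma,\tau\gamma)=f(\sigma,\tau)f(\sigma\tau,\gamma)$, $f(1,\sigma)=f(\sigma,1)=1$; values need not be units. $A_f=\bigoplus_{\sigma\in G}Sx_\sigma$ (free left $S$-module) with $(sx_\sigma)(tx_\tau)=s\,\sigma(t)f(\sigma,\tau)x_{\sigma\tau}$, $G$-graded with components $Sx_\sigma$; $J_G(A_f)$ is its graded Jacobson radical (intersection of graded left ideals maximal among proper graded left ideals). An empty intersection of ideals is $S$. *)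

From HB Require Import structures.
From mathcomp Require Import all_boot all_order all_algebra all_fingroup all_field.
Set Implicit Arguments. Unset Strict Implicit. Unset Printing Implicit Defensive.
Import GRing.Theory.
Local Open Scope ring_scope.

Section CrossedProduct.
Variables (F : fieldType) (L : splittingFieldType F).

Notation gT := (gal_of {:L}).

(* Composition in the usual (paper) order: (gcomp s t) a = s (t a).
   Note mathcomp's group law satisfies (x * y)%g a = y (x a). *)
Definition gcomp (s t : gT) : gT := (t * s)%g.

Definition valuation_ring_of (V : {pred F}) : Prop :=
  [/\ 1 \in V, (forall x y, x \in V -> y \in V -> x - y \in V),
      (forall x y, x \in V -> y \in V -> x * y \in V)
    & (forall x : F, x != 0 -> x \in V \/ x^-1 \in V)].

Definition integral_closure (V : {pred F}) (x : L) : Prop :=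
  exists p : {poly F}, [/\ p \is monic, (forall i, p`_i \in V)
                         & root (map_poly (in_alg L) p) x].

Definition normalized_2cocycle (f : gT -> gT -> L) : Prop :=
  (forall s t g : gT, s (f t g) * f s (gcomp t g) = f s t * f (gcomp s t) g) /\
  (forall s : gT, f 1%g s = 1 /\ f s 1%g = 1).

Definition ideal_of (S : L -> Prop) (M : L -> Prop) : Prop :=
  [/\ (forall x, M x -> S x), M 0, (forall x y, M x -> M y -> M (x + y))
    & (forall s x, S s -> M x -> M (s * x))].

Definition maximal_ideal_of (S : L -> Prop) (M : L -> Prop) : Prop :=
  [/\ ideal_of S M, ~ M 1
    & forall J, ideal_of S J -> (forall x, M x -> J x) ->
        ~ J 1 -> forall x, J x -> M x].

(* I_sigma = intersection of the maximal ideals M of S with f(s,s^-1) not in M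
   (empty intersection = S). *)
Definition I_sigma (S : L -> Prop) (f : gT -> gT -> L) (s : gT) (x : L) : Prop :=
  S x /\ forall M, maximal_ideal_of S M -> ~ M (f s (s^-1)%g) -> M x.

(* The crossed product A_f = (+)_s S x_s, elements a = sum_s a(s) x_s
   represented by their coefficient functions. *)
Definition Af (S : L -> Prop) (a : {ffun gT -> L}) : Prop := forall s, S (a s).

(* (s a x_s)(b x_t) = a s(b) f(s,t) x_{st} *)
Definition Af_mul (f : gT -> gT -> L) (a b : {ffun gT -> L}) : {ffun gT -> L} :=
  [ffun r => \sum_(s : gT) \sum_(t : gT | gcomp s t == r) a s * s (b t) * f s t].

Definition homog (c : L) (s : gT) : {ffun gT -> L} :=
  [ffun t => if t == s then c else 0].

Definition graded_left_ideal (S : L -> Prop) (f : gT -> gT -> L)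
    (I : {ffun gT -> L} -> Prop) : Prop :=
  [/\ (forall a, I a -> Af S a), I 0,
      (forall a b, I a -> I b -> I (a - b)),
      (forall b a, Af S b -> I a -> I (Af_mul f b a))
    & (forall a, I a -> forall s, I (homog (a s) s))].

Definition proper_in (S : L -> Prop) (I : {ffun gT -> L} -> Prop) : Prop :=
  exists a, Af S a /\ ~ I a.

Definition maximal_graded_left_ideal (S : L -> Prop) (f : gT -> gT -> L)
    (I : {ffun gT -> L} -> Prop) : Prop :=
  [/\ graded_left_ideal S f I, proper_in S I
    & forall J, graded_left_ideal S f J -> proper_in S J ->
        (forall a, I a -> J a) -> forall a, J a -> I a].

(* graded Jacobson radical: intersection of the maximal graded left ideals
   (empty intersection = A_f). *)
Definition graded_jacobson (S : L -> Prop) (f : gT -> gT -> L)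
    (a : {ffun gT -> L}) : Prop :=
  Af S a /\ forall I, maximal_graded_left_ideal S f I -> I a.

End CrossedProduct.

From HB Require Import structures.
From mathcomp Require Import all_boot all_order all_algebra all_fingroup all_field.
From Stdlib Require Import Classical.
Set Implicit Arguments. Unset Strict Implicit. Unset Printing Implicit Defensive.
Import GRing.Theory.
Local Open Scope ring_scope.

(* A maximal graded left ideal I of A_f is determined by its identity
   component N = {c | c x_1 \in I}, a maximal ideal of S: since
   x_{t^-1} (a_t x_t) = t^-1(a_t) f(t^-1,t) x_1, the ideal I consists of the a
   with t^-1(a_t) f(t^-1,t) \in N for all t, and every maximal N arises this
   way. So a \in J_G(A_f) iff each t^-1(a_t) f(t^-1,t) lies in every maximal
   ideal of S. Applying t, which permutes the maximal ideals of S and maps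
   f(t^-1,t) to f(t,t^-1), this says a_t f(t,t^-1) lies in every maximal
   ideal, i.e. a_t \in I_t because maximal ideals are prime. *)

Lemma valuation_ring_subring_closed (F : fieldType) (V : {pred F}) :
  valuation_ring_of V -> subring_closed V.
Proof. by case=> V1 VB VM _; split. Qed.

Section IntegralClosure.
Variables (F : fieldType) (V : {pred F}).
Hypothesis V_subring : subring_closed V.

HB.instance Definition _ := GRing.isSubringClosed.Build F V V_subring.
Definition subring_of := {x : F | x \in V}.
HB.instance Definition _ := [isSub of subring_of for @sval F (fun x => x \in V)].
HB.instance Definition _ := [Choice of subring_of by <:].
HB.instance Definition _ :=
  GRing.SubChoice_isSubComNzRing.Build F V subring_of V_subring.

Variable L : splittingFieldType F.
Local Notation S := (@integral_closure F L V).

Lemma integral_closureE (x : L) :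
  S x <-> integralOver (in_alg L \o val : subring_of -> L) x.
Proof.
split=> [[p [p_monic p_V p_x]] | [q q_monic q_x]].
  pose q : {poly subring_of} := \poly_(i < size p) insubd 0 p`_i.
  have val_q : map_poly val q = p.
    apply/polyP => i; rewrite coef_map coef_poly.
    by case: ltnP => [_ | le_p_i] /=; [rewrite insubdK | rewrite nth_default].
  exists q; last by move: p_x; rewrite -val_q -map_poly_comp.
  by move: p_monic; rewrite -val_q !monicE lead_coef_map_inj //; apply: val_inj.
exists (map_poly val q); split; last by rewrite -map_poly_comp.
  by rewrite monicE lead_coef_map_inj //; apply: val_inj.
by move=> i; rewrite coef_map; apply: valP.
Qed.

Lemma integral_closure0 : S 0.
Proof. by apply/integral_closureE; apply: integral0. Qed.

Lemma integral_closure1 : S 1.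
Proof. by apply/integral_closureE; apply: integral1. Qed.

Lemma integral_closureD x y : S x -> S y -> S (x + y).
Proof.
by move=> /integral_closureE Sx /integral_closureE Sy; apply/integral_closureE/integral_add.
Qed.

Lemma integral_closureM x y : S x -> S y -> S (x * y).
Proof.
by move=> /integral_closureE Sx /integral_closureE Sy; apply/integral_closureE/integral_mul.
Qed.

Lemma integral_closureN x : S x -> S (- x).
Proof. by move=> /integral_closureE Sx; apply/integral_closureE/integral_opp. Qed.

Lemma integral_closure_gal (s : gal_of {:L}) x : S x -> S (s x).
Proof.
case=> p [p_monic p_V /eqP p_x]; exists p; split => //; apply/eqP.
have fix_F c : s (in_alg L c) = in_alg L c by rewrite /= linearZ /= rmorph1.
have -> : map_poly (in_alg L) p = map_poly s (map_poly (in_alg L) p).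
  by apply/polyP => i; rewrite !coef_map /= fix_F.
by rewrite horner_map p_x rmorph0.
Qed.

End IntegralClosure.

Section MaximalIdeals.
Variables (F : fieldType) (L : splittingFieldType F) (S : L -> Prop).
Hypotheses (S0 : S 0) (S1 : S 1).
Hypothesis SD : forall x y, S x -> S y -> S (x + y).
Hypothesis SM : forall x y, S x -> S y -> S (x * y).
Hypothesis S_gal : forall (s : gal_of {:L}) x, S x -> S (s x).
Local Notation gT := (gal_of {:L}).

Lemma gal_invgK (s : gT) : cancel s (s^-1)%g.
Proof. by move=> x; rewrite -galM ?memvf // mulgV gal_id. Qed.

Lemma gal_invgKV (s : gT) : cancel (s^-1)%g s.
Proof. by move=> x; rewrite -galM ?memvf // mulVg gal_id. Qed.

Definition gal_comap (s : gT) (M : L -> Prop) (y : L) : Prop := S y /\ M (s y).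

Lemma ideal_gal_comap s M : ideal_of S M -> ideal_of S (gal_comap s M).
Proof.
case=> _ M0 MD MM; split=> [y [] // | | x y [Sx Mx] [Sy My] | c x Sc [Sx Mx]].
- by split; rewrite ?rmorph0.
- by split; [apply: SD | rewrite rmorphD; apply: MD].
- by split; [apply: SM | rewrite rmorphM; apply: MM => //; apply: S_gal].
Qed.

Lemma maximal_ideal_gal_comap s M :
  maximal_ideal_of S M -> maximal_ideal_of S (gal_comap s M).
Proof.
case=> M_ideal M1 M_max; split; first exact: ideal_gal_comap.
  by case; rewrite rmorph1.
have [MS _ _ _] := M_ideal.
move=> J J_ideal sub_MJ J1 x Jx; have [JS _ _ _] := J_ideal.
have sub_MJ' y : M y -> gal_comap (s^-1)%g J y.
  move=> My; split; first exact: MS.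
  by apply: sub_MJ; split; [apply/S_gal/MS | rewrite gal_invgKV].
have J'1 : ~ gal_comap (s^-1)%g J 1 by case; rewrite rmorph1.
split; first exact: JS.
apply: (M_max _ (ideal_gal_comap _ J_ideal) sub_MJ' J'1).
by split; [apply: S_gal; apply: JS | rewrite gal_invgK].
Qed.

Lemma maximal_ideal_prime M : maximal_ideal_of S M ->
  forall x y, S x -> S y -> M (x * y) -> ~ M x -> M y.
Proof.
case=> [[MS M0 MD MM] M1 M_max] x y Sx Sy Mxy nMx.
pose J z := exists m c, [/\ M m, S c & z = m + c * x].
have J_ideal : ideal_of S J.
  split=> [z [m [c [Mm Sc ->]]] | | z1 z2 [m1 [c1 [Mm1 Sc1 ->]]] [m2 [c2 [Mm2 Sc2 ->]]]
          | c z Sc [m [c' [Mm Sc' ->]]]].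
  - by apply: SD; [apply: MS | apply: SM].
  - by exists 0, 0; rewrite mul0r addr0.
  - by exists (m1 + m2), (c1 + c2); split; [apply: MD | apply: SD | rewrite mulrDl addrACA].
  - by exists (c * m), (c * c'); split; [apply: MM | apply: SM | rewrite mulrDr mulrA].
have [m [c [Mm Sc E]]] : J 1.
  apply: NNPP => nJ1; apply: nMx; apply: (M_max J J_ideal) => //.
    by move=> z Mz; exists z, 0; rewrite mul0r addr0.
  by exists 0, 1; rewrite mul1r add0r.
have -> : y = m * y + c * (x * y) by rewrite mulrA -mulrDl -E mul1r.
by apply: MD; [rewrite mulrC |]; apply: MM.
Qed.

Lemma all_maximal_ideals_gal (s : gT) y : S y ->
  (forall N, maximal_ideal_of S N -> N (s y)) <->
  (forall M, maximal_ideal_of S M -> M y).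
Proof.
move=> Sy; split=> [all_N M M_max | all_M N N_max].
  by have [_] := all_N _ (maximal_ideal_gal_comap (s^-1)%g M_max); rewrite gal_invgK.
by have [] := all_M _ (maximal_ideal_gal_comap s N_max).
Qed.

Lemma all_maximal_ideals_mul x c : S x -> S c ->
  (forall M, maximal_ideal_of S M -> M (x * c)) <->
  (forall M, maximal_ideal_of S M -> ~ M c -> M x).
Proof.
move=> Sx Sc; split=> [all_M M M_max nMc | all_M M M_max].
  by apply: (maximal_ideal_prime M_max Sc Sx _ nMc); rewrite mulrC; apply: all_M.
have [[_ _ _ MM] _ _] := M_max.
case: (classic (M c)) => [Mc | nMc]; first exact: MM.
by rewrite mulrC; apply: MM; last apply: all_M.
Qed.

End MaximalIdeals.

Section GradedIdeals.
Variables (F : fieldType) (L : splittingFieldType F) (S : L -> Prop).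
Hypotheses (S0 : S 0) (S1 : S 1).
Hypothesis SD : forall x y, S x -> S y -> S (x + y).
Hypothesis SM : forall x y, S x -> S y -> S (x * y).
Hypothesis SN : forall x, S x -> S (- x).
Hypothesis S_gal : forall (s : gal_of {:L}) x, S x -> S (s x).
Variable f : gal_of {:L} -> gal_of {:L} -> L.
Hypothesis f_S : forall s t, S (f s t).
Hypothesis f_cocycle : normalized_2cocycle f.
Local Notation gT := (gal_of {:L}).

Lemma cocycle1g s : f 1%g s = 1.
Proof. by case: f_cocycle => _ /(_ s) []. Qed.

Lemma cocycleg1 s : f s 1%g = 1.
Proof. by case: f_cocycle => _ /(_ s) []. Qed.

Lemma gal_cocycleVg (s : gT) : s (f (s^-1)%g s) = f s (s^-1)%g.
Proof.
case: f_cocycle => /(_ s (s^-1)%g s) + _.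
by rewrite /gcomp mulgV mulVg cocycleg1 cocycle1g !mulr1.
Qed.

Lemma cocycleV_gcomp (s t : gT) :
  ((gcomp s t)^-1)%g (f s t) * f ((gcomp s t)^-1)%g (gcomp s t)
  = f ((gcomp s t)^-1)%g s * f (t^-1)%g t.
Proof.
case: f_cocycle => /(_ ((gcomp s t)^-1)%g s t) + _.
by rewrite [gcomp _ s]/gcomp invMg mulKVg.
Qed.

Lemma gal_gcompV (s t : gT) x : ((gcomp s t)^-1)%g (s x) = (t^-1)%g x.
Proof. by rewrite -galM ?memvf // /gcomp invMg mulKVg. Qed.

Lemma S_sum (I : finType) (P : pred I) (G : I -> L) :
  (forall i, P i -> S (G i)) -> S (\sum_(i | P i) G i).
Proof. by move=> S_G; apply: big_ind. Qed.

Lemma Af_homog c s : S c -> Af S (homog c s).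
Proof. by move=> Sc t; rewrite ffunE; case: eqP. Qed.

Lemma Af_mul_homog c d (s t : gT) :
  Af_mul f (homog c s) (homog d t) = homog (c * s d * f s t) (gcomp s t).
Proof.
apply/ffunP => r; rewrite !ffunE (bigD1 s) //= [X in _ + X]big1 => [|s' ns']; last first.
  by apply: big1 => t' _; rewrite ffunE (negbTE ns') !mul0r.
rewrite ffunE eqxx addr0 big_mkcond (bigD1 t) //= [X in _ + X]big1 => [|t' nt']; last first.
  by rewrite ffunE (negbTE nt') rmorph0 mulr0 mul0r if_same.
by rewrite ffunE eqxx addr0 eq_sym.
Qed.

Lemma Af_mul_homog1 b : Af_mul f b (homog 1 1%g) = b.
Proof.
apply/ffunP => r; rewrite !ffunE (bigD1 r) //= [X in _ + X]big1 => [|s ns]; last first.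
  apply: big1 => t /eqP def_r; rewrite ffunE; case: eqP => [t1 | _].
    by move: def_r ns; rewrite t1 /gcomp mul1g => ->; rewrite eqxx.
  by rewrite rmorph0 mulr0 mul0r.
rewrite addr0 big_mkcond (bigD1 1%g) //= [X in _ + X]big1 => [|t nt]; last first.
  by rewrite ffunE (negbTE nt) rmorph0 mulr0 mul0r if_same.
by rewrite /gcomp mul1g eqxx ffunE eqxx rmorph1 cocycleg1 !mulr1 addr0.
Qed.

Lemma graded_left_ideal_full J : graded_left_ideal S f J ->
  J (homog 1 1%g) -> forall b, Af S b -> J b.
Proof. by case=> _ _ _ JM _ J1 b Ab; rewrite -(Af_mul_homog1 b); apply: JM. Qed.

(* x_{t^-1} (a_t x_t) = t^-1(a_t) f(t^-1,t) x_1, so this is the largest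
   graded left ideal whose identity component is N. *)
Definition graded_lift (N : L -> Prop) (a : {ffun gT -> L}) : Prop :=
  Af S a /\ forall t : gT, N ((t^-1)%g (a t) * f (t^-1)%g t).

Definition base_ideal (J : {ffun gT -> L} -> Prop) (x : L) : Prop :=
  S x /\ J (homog x 1%g).

Lemma graded_lift_mono (N N' : L -> Prop) a :
  (forall x, N x -> N' x) -> graded_lift N a -> graded_lift N' a.
Proof. by move=> sNN' [Aa Na]; split=> // t; apply: sNN'. Qed.

Lemma graded_lift_graded N : ideal_of S N -> graded_left_ideal S f (graded_lift N).
Proof.
case=> NS N0 ND NM.
split=> [a [] // | | a b [Aa Na] [Ab Nb] | b a Ab [Aa Na] | a [Aa Na] s].
- by split=> t; rewrite ffunE // rmorph0 mul0r.
- split=> t; rewrite !ffunE; first by apply: SD; last apply: SN.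
  rewrite rmorphB mulrBl; apply: ND; first exact: Na.
  by rewrite -mulN1r; apply: NM (Nb t); apply: SN.
- split=> r; rewrite ffunE.
    by do 2![apply: S_sum => ? _]; do 2!apply: SM => //; apply: S_gal.
  rewrite rmorph_sum mulr_suml; apply: big_ind => // s _.
  rewrite rmorph_sum mulr_suml; apply: big_ind => // t /eqP def_r; subst r.
  rewrite !rmorphM /= gal_gcompV -mulrA cocycleV_gcomp mulrACA.
  by apply: NM (Na t); apply: SM; [apply: S_gal | apply: f_S].
- by split=> t; rewrite ffunE; case: eqP => [t_s | _]; subst; rewrite ?rmorph0 ?mul0r.
Qed.

Lemma graded_lift_proper N : ~ N 1 -> proper_in S (graded_lift N).
Proof.
move=> N1; exists (homog 1 1%g); split; first exact: Af_homog.
by case=> _ /(_ 1%g); rewrite ffunE eqxx invg1 gal_id cocycle1g mulr1.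
Qed.

Lemma graded_lift_homog1 N : ideal_of S N -> forall x, N x -> graded_lift N (homog x 1%g).
Proof.
case=> NS N0 _ _ x Nx; split=> [|t]; first exact/Af_homog/NS.
rewrite ffunE; case: eqP => [-> | _]; last by rewrite rmorph0 mul0r.
by rewrite invg1 gal_id cocycle1g mulr1.
Qed.

Lemma base_ideal_ideal J : graded_left_ideal S f J -> ideal_of S (base_ideal J).
Proof.
case=> _ J0 JB JM _.
have homog0 : homog 0 1%g = 0 :> {ffun gT -> L}.
  by apply/ffunP => t; rewrite !ffunE if_same.
split=> [x [] // | | x y [Sx Jx] [Sy Jy] | c x Sc [Sx Jx]].
- by split; rewrite ?homog0.
- split; first exact: SD.
  have -> : homog (x + y) 1%g = homog x 1%g - (0 - homog y 1%g).
    by apply/ffunP => t; rewrite !ffunE; case: eqP => _; rewrite ?subr0 ?sub0r ?opprK.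
  exact: JB Jx (JB _ _ J0 Jy).
- split; first exact: SM.
  have := JM _ _ (Af_homog 1%g Sc) Jx.
  by rewrite Af_mul_homog gal_id cocycle1g mulr1 /gcomp mulg1.
Qed.

Lemma base_ideal_proper J :
  graded_left_ideal S f J -> proper_in S J -> ~ base_ideal J 1.
Proof.
by move=> J_graded [b [Ab nJb]] [_ J1]; apply/nJb/(graded_left_ideal_full J_graded).
Qed.

Lemma graded_sub_lift_base J :
  graded_left_ideal S f J -> forall a, J a -> graded_lift (base_ideal J) a.
Proof.
case=> JA _ _ JM JH a Ja; split=> [|t]; first exact: JA.
split; first by apply: SM; [apply: S_gal; apply: JA | apply: f_S].
have := JM _ _ (Af_homog (t^-1)%g S1) (JH a Ja t).
by rewrite Af_mul_homog mul1r /gcomp mulgV.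
Qed.

Lemma maximal_graded_lift N :
  maximal_ideal_of S N -> maximal_graded_left_ideal S f (graded_lift N).
Proof.
case=> N_ideal N1 N_max; split; [exact: graded_lift_graded | exact: graded_lift_proper |].
move=> J J_graded J_proper sub_NJ a Ja.
have sub_JN x : base_ideal J x -> N x.
  apply: N_max; [exact: base_ideal_ideal | | exact: base_ideal_proper].
  move=> y Ny; have [NS _ _ _] := N_ideal; split; first exact: NS.
  by apply: sub_NJ; apply: graded_lift_homog1.
exact: graded_lift_mono sub_JN (graded_sub_lift_base J_graded Ja).
Qed.

Lemma maximal_base_ideal I :
  maximal_graded_left_ideal S f I -> maximal_ideal_of S (base_ideal I).
Proof.
case=> I_graded I_proper I_max.
split; [exact: base_ideal_ideal | exact: base_ideal_proper |].
move=> N N_ideal sub_IN N1 x Nx; have [NS _ _ _] := N_ideal; split; first exact: NS.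
apply: (I_max _ (graded_lift_graded N_ideal) (graded_lift_proper N1)).
  by move=> a Ia; apply: graded_lift_mono sub_IN (graded_sub_lift_base I_graded Ia).
exact: graded_lift_homog1.
Qed.

Lemma graded_jacobsonE a : graded_jacobson S f a <->
  Af S a /\ forall N, maximal_ideal_of S N -> graded_lift N a.
Proof.
split=> [[Aa all_I] | [Aa all_N]].
  by split=> // N N_max; apply: all_I; apply: maximal_graded_lift.
split=> // I I_max; have [I_graded I_proper I_max'] := I_max.
apply: (I_max' _ (graded_lift_graded (base_ideal_ideal I_graded))).
- exact/graded_lift_proper/base_ideal_proper.
- exact: graded_sub_lift_base.
- exact/all_N/maximal_base_ideal.
Qed.

Lemma all_maximal_ideals_coefE (t : gT) x : S x ->
  (forall N, maximal_ideal_of S N -> N ((t^-1)%g x * f (t^-1)%g t)) <->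
  I_sigma S f t x.
Proof.
move=> Sx; have f_tV := gal_cocycleVg (t^-1)%g; rewrite invgK in f_tV.
rewrite -f_tV -rmorphM all_maximal_ideals_gal //; last exact: SM.
by rewrite all_maximal_ideals_mul //; split=> [|[]].
Qed.

Lemma graded_jacobson_coefE a :
  graded_jacobson S f a <-> forall s, I_sigma S f s (a s).
Proof.
rewrite graded_jacobsonE; split=> [[Aa all_N] s | I_a].
  by apply/all_maximal_ideals_coefE => // N /all_N [_].
split=> [s | N N_max]; first by case: (I_a s).
split=> [s | t]; first by case: (I_a s).
exact: (all_maximal_ideals_coefE _ (I_a t).1).2 (I_a t) N N_max.
Qed.

End GradedIdeals.

Unset Implicit Arguments.
Theorem proposition2p4 (F : fieldType) (L : splittingFieldType F)
  (V : {pred F}) (f : gal_of {:L} -> gal_of {:L} -> L) :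
  valuation_ring_of V ->
  galois 1%VS {:L} ->
  (forall s t, integral_closure V (f s t) /\ f s t != 0) ->
  normalized_2cocycle f ->
  forall a : {ffun gal_of {:L} -> L},
    graded_jacobson (integral_closure V) f a <->
    (forall s, I_sigma (integral_closure V) f s (a s)).
Proof.
move=> /valuation_ring_subring_closed V_subring _ f_S f_cocycle a.
have S_f s t := (f_S s t).1.
exact: (graded_jacobson_coefE (integral_closure0 V_subring L)
  (integral_closure1 V_subring L) (@integral_closureD _ _ V_subring L)
  (@integral_closureM _ _ V_subring L) (@integral_closureN _ _ V_subring L)
  (@integral_closure_gal _ _ L) S_f f_cocycle a).
Qed.
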